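(* Let $L$ be a probability measure on $\mathbb{N}$ and $F:\mathbb{N}\to\mathbb{N}$ a function with $\max_ic_i\le F(n)$ for all $n\in\mathbb{N}$. Define $\mathbf g=(g_1,\dots,g_D):[0,1]^D\times\mathcal S\to\mathbb{R}^D$ by $$g_i(\mathbf x,\tau,a,u)=\frac{1}{F(\tau)}\Big[\sum_{j=1}^D\sum_{m=1}^\infty a_{jm}\mathbf 1_{\{u_{jm}\le x_j\}}\Big]-x_i .$$ Then there is a constant $K_c$ such that for all $\mathbf x,\mathbf z\in[0,1]^D$ and all $i=1,\dots,D$, $$\int_{\mathcal S}|g_i(\mathbf z,\tau,a,u)-g_i(\mathbf x,\tau,a,u)|\,\mathfrak A^{(i)}(d\tau,da)\,du\le K_c\|\mathbf x-\mathbf z\|.$$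
   Context: $D\in\mathbb{N}$; $c_{ij}\in\mathbb{N}_0$ ($i\ne j$) with $c_i:=\sum_{j\ne i}c_{ij}=\sum_{j\ne i}c_{ji}$. $\mathcal S=\mathbb{N}_0\times\mathbb{N}_0^{D\times\mathbb{N}}\times[0,1]^{D\times\mathbb{N}}$, $du$ is the product uniform (Lebesgue) measure on $[0,1]^{D\times\mathbb{N}}$, $\|\cdot\|$ the Euclidean norm, and $\mathfrak A^{(i)}(d\tau,da)=L(d\tau)A^{(i)}(\tau,da)$ where $A^{(i)}(\tau,\cdot)$ is the law of $(a_{jm}(\tau))_{j,m}$ for the Markov chain over $r=1,\dots,\tau$: $a_{im}(1)=1$ for $m\le F(1)-c_i$ (else $0$), for $j\ne i$ $a_{jm}(1)=1$ for $m\le c_{ji}$ (else $0$); from $r$ to $r+1$ each of $F(r+1)-c_i$ individuals independently picks family $(j,m)$ with probability $a_{jm}(r)/F(r)$, existing family sizes become the numbers of picks, and for each $j\ne i$ new families $a_{jm}(r+1)=1$, $c_{ji}r<m\le c_{ji}(r+1)$, are added. *)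

From HB Require Import structures.
From mathcomp Require Import all_boot all_order all_algebra.
From mathcomp Require Import all_classical all_reals all_analysis.
Set Implicit Arguments. Unset Strict Implicit. Unset Printing Implicit Defensive.
Import Order.TTheory GRing.Theory Num.Theory.
Local Open Scope classical_set_scope.
Local Open Scope ring_scope.

Section Defs.
Variable R : realType.
Variable D : nat.
Variable c : 'I_D -> 'I_D -> nat.

Definition csum (k : 'I_D) : nat := (\sum_(j < D | j != k) c k j)%N.

(* a state of the family-size chain: (j, m) |-> a_{jm}; index m = 0 unused *)
Definition state := 'I_D -> nat -> nat.

Variable F : nat -> nat.
Variable i : 'I_D.

Definition init_state : state := fun j m =>
  if j == i then (if (1 <= m <= F 1 - csum i)%N then 1%N else 0%N)
  else (if (1 <= m <= c j i)%N then 1%N else 0%N).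

(* all families that can be non-empty at step r (indices beyond carry a_{jm}=0) *)
Definition fams (r : nat) : seq ('I_D * nat) :=
  [seq (j, m) | j <- enum 'I_D, m <- iota 1 (F 1 + (\sum_(j < D) c j i) * r)%N].

Fixpoint seqs {T : Type} (n : nat) (l : seq T) : seq (seq T) :=
  match n with
  | 0 => [:: [::]]
  | n'.+1 => [seq x :: s | x <- l, s <- seqs n' l]
  end.

Definition newstate (r : nat) (s : seq ('I_D * nat)) : state := fun j m =>
  (count_mem (j, m) s +
   (if (j != i) && (c j i * r < m <= c j i * r.+1)%N then 1 else 0))%N.

(* one step r -> r+1: each of F(r+1) - c_i individuals independently picks
   family (j,m) with probability a_{jm}(r)/F(r); finitely supported law
   given as a list of (weight, outcome) *)
Definition transition (r : nat) (a : state) : seq (R * state) :=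
  [seq (\prod_(p <- s) ((a p.1 p.2)%:R / (F r)%:R), newstate r s)
  | s <- seqs (F r.+1 - csum i)%N (fams r)].

(* lawA n = law of (a_{jm}(n+1))_{j,m}, i.e. A^{(i)}(n+1, .) *)
Fixpoint lawA (n : nat) : seq (R * state) :=
  match n with
  | 0 => [:: (1, init_state)]
  | n'.+1 => flatten [seq [seq (q.1 * q'.1, q'.2) | q' <- transition n q.2]
                     | q <- lawA n']
  end.

End Defs.

Definition gfun (R : realType) (D : nat) (F : nat -> nat) (k : 'I_D)
    (x : 'I_D -> R) (tau : nat) (a : state D) (u : 'I_D -> nat -> R) : R :=
  (F tau)%:R^-1 *
    (\sum_(j < D) limn (fun n : nat => \sum_(1 <= m < n)
        ((a j m)%:R * (if u j m <= x j then 1 else 0) : R)))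
  - x k.

Definition eucl_norm (R : realType) (D : nat) (x : 'I_D -> R) : R :=
  Num.sqrt (\sum_(j < D) x j ^+ 2).

Definition mutually_independent (R : realType) (d : measure_display)
    (T : measurableType d) (P : probability T R) (I : eqType)
    (X : I -> T -> R) : Prop :=
  forall (s : seq I), uniq s ->
  forall B : I -> set R, (forall k, measurable (B k)) ->
  P (\bigcap_(k in [set` s]) (X k @^-1` B k)) =
  (\prod_(k <- s) P (X k @^-1` B k))%E.

From HB Require Import structures.
From mathcomp Require Import all_boot all_order all_algebra.
From mathcomp Require Import all_classical all_reals all_analysis.
From mathcomp Require Import measurable_realfun zify ring.
Import Order.TTheory GRing.Theory Num.Theory.
Local Open Scope classical_set_scope.
Local Open Scope ring_scope.

(* Fix a family-size state a whose families beyond index N are empty. Then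
   g_i(z) - g_i(x) + (z_i - x_i) is F(tau)^-1 times a sum of a_{jm} times differences of
   indicators, and such a difference is nonzero only on the event
   min(x_j, z_j) < u_{jm} <= max(x_j, z_j), of uniform probability |x_j - z_j| <= ||x - z||.
   Hence E|g_i(z) - g_i(x)| <= (F(tau)^-1 sum a_{jm} + 1) ||x - z||. Along the chain the
   F(r+1) - c_i picks and the c_i newly created families keep the total size at most F(r+1)
   (this is where sum_j c_{ji} = c_i is used) and the support finite, so the bracket is at
   most 2 for tau >= 1; the case tau = 0, where tau.-1 = 0 makes the state a(1), costs the
   extra F(1)/F(0). Averaging over the law of a(tau) and over L gives K_c = 2 + F(1)/F(0). *)

Lemma sum_iota_itv_le lo n a b :
  (\sum_(m <- iota lo n) (if (a < m <= b)%N then 1 else 0) <= b - a)%N.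
Proof.
rewrite -big_mkcond sum1_count -size_filter -(size_iota a.+1 (b - a)).
apply: uniq_leq_size => [|m]; first by rewrite filter_uniq ?iota_uniq.
by rewrite mem_filter !mem_iota => /andP[/andP[am mb] _]; lia.
Qed.

Lemma sum_count_mem_le (T : eqType) (l s : seq T) : uniq l ->
  (\sum_(p <- l) count_mem p s <= size s)%N.
Proof.
move=> ul; elim: s => [|x s IH] /=; first by rewrite big1.
rewrite big_split /= (eq_bigr (fun p => if p == x then 1 else 0)%N) => [|p _].
  by rewrite -big_mkcond sum1_count count_uniq_mem //; case: (x \in l) => /=; lia.
by rewrite eq_sym; case: eqP.
Qed.

Lemma mem_seqs {T : eqType} {k} {l : seq T} {s} :
  s \in seqs k l -> {subset s <= l}.
Proof.
elim: k s => [|k IH] s /=; first by rewrite inE => /eqP ->.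
case/allpairsPdep=> [y [s' [yl s'k ->]]] x; rewrite inE => /orP [/eqP ->//|].
exact: IH.
Qed.

Lemma size_seqs {T : eqType} {k} {l : seq T} {s} : s \in seqs k l -> size s = k.
Proof.
elim: k s => [|k IH] s /=; first by rewrite inE => /eqP ->.
by case/allpairsPdep=> [y [s' [_ s'k ->]]] /=; rewrite (IH _ s'k).
Qed.

Lemma sum_seqs_prod (T : Type) (R : comPzSemiRingType) (f : T -> R) k l :
  \sum_(s <- seqs k l) \prod_(p <- s) f p = (\sum_(p <- l) f p) ^+ k.
Proof.
elim: k => [|k IH] /=; first by rewrite big_seq1 big_nil expr0.
rewrite big_allpairs_dep exprS -IH mulr_suml; apply: eq_bigr => x _.
by rewrite mulr_sumr; apply: eq_bigr => s _; rewrite big_cons.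
Qed.

Section Chain.
Variables (D : nat) (c : 'I_D -> 'I_D -> nat) (F : nat -> nat) (i : 'I_D).
Hypothesis csum_balanced : csum c i = (\sum_(j < D | j != i) c j i)%N.
Hypothesis csum_le_F : forall n, (0 < n)%N -> (csum c i <= F n)%N.

Definition nfam r := (F 1 + (\sum_(j < D) c j i) * r)%N.

Definition mass r (a : state D) := (\sum_(p <- fams c F i r) a p.1 p.2)%N.

Definition admissible r (a : state D) :=
  (forall j m, (nfam r < m)%N -> a j m = 0%N) /\ (mass r a <= F r)%N.

Lemma leq_c_sum j : (c j i <= \sum_(j < D) c j i)%N.
Proof. by rewrite (bigD1 j) //= leq_addr. Qed.

Lemma mem_fams r p : p \in fams c F i r -> (1 <= p.2 <= nfam r)%N.
Proof. by case/allpairsPdep=> [j [m [_ + ->]]] /=; rewrite mem_iota /nfam; lia. Qed.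

Lemma fams_uniq r : uniq (fams c F i r).
Proof.
apply: allpairs_uniq_dep => [|j _|]; rewrite ?enum_uniq ?iota_uniq //.
by move=> [j1 m1] [j2 m2] _ _ [-> ->].
Qed.

Lemma sum_fams r (f : 'I_D -> nat -> nat) :
  (\sum_(p <- fams c F i r) f p.1 p.2 =
   \sum_(j < D) \sum_(m <- iota 1 (nfam r)) f j m)%N.
Proof. by rewrite big_allpairs_dep enumT. Qed.

Lemma sum_if_eq_i (f : 'I_D -> nat) A :
  (\sum_(j < D) (if j == i then A else f j) = A + \sum_(j < D | j != i) f j)%N.
Proof.
rewrite (bigD1 i) //= eqxx; congr (_ + _)%N.
by apply: eq_bigr => j /negbTE ->.
Qed.

Lemma init_admissible : admissible 1 (init_state c F i).
Proof.
split=> [j m|].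
  rewrite /init_state /nfam => hm; have := leq_c_sum j.
  by case: ifP => _; case: ifP => //; lia.
rewrite /mass sum_fams.
apply: (@leq_trans (\sum_(j < D) if j == i then F 1 - csum c i else c j i)%N).
  apply: leq_sum => j _; rewrite /init_state.
  by case: eqP => _; rewrite -[X in (_ <= X)%N]subn0; exact: sum_iota_itv_le.
by rewrite sum_if_eq_i -csum_balanced subnK // csum_le_F.
Qed.

Lemma newstate_admissible r s : (0 < r)%N ->
  s \in seqs (F r.+1 - csum c i) (fams c F i r) ->
  admissible r.+1 (newstate c i r s).
Proof.
move=> r_gt0 s_picks; split=> [j m hm|].
  rewrite /newstate; have -> : count_mem (j, m) s = 0%N.
    apply/count_memPn/negP => /(mem_seqs s_picks)/mem_fams /=.
    by move: hm; rewrite /nfam; lia.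
  have := leq_mul (leq_c_sum j) (leqnn r.+1).
  by move: hm; rewrite /nfam; case: ifP => // /andP[_ /andP[_]]; lia.
rewrite /mass /newstate big_split /=.
apply: (@leq_trans ((F r.+1 - csum c i) + csum c i)%N); last first.
  by rewrite subnK // csum_le_F.
apply: leq_add.
  by rewrite -(size_seqs s_picks) sum_count_mem_le // fams_uniq.
rewrite (sum_fams r.+1 (fun j m =>
  if (j != i) && (c j i * r < m <= c j i * r.+1)%N then 1 else 0)%N) /=.
apply: (@leq_trans (\sum_(j < D) if j == i then 0 else c j i)%N).
  apply: leq_sum => j _; case: eqP => [-> | _] /=.
    by rewrite big1 // => m _; rewrite eqxx.
  apply: leq_trans (sum_iota_itv_le _ _ _ _) _.
  by rewrite mulnS addnK.
by rewrite sum_if_eq_i -csum_balanced.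
Qed.

End Chain.

Arguments nfam {D}.
Arguments mass {D}.
Arguments admissible {D}.

Definition law_expect {R : realType} {T : Type} (l : seq (R * T)) (f : T -> \bar R) :=
  (\sum_(q <- l) (q.1)%:E * f q.2)%E.

Section LawA.
Variables (R : realType) (D : nat) (c : 'I_D -> 'I_D -> nat) (F : nat -> nat) (i : 'I_D).
Hypothesis csum_balanced : csum c i = (\sum_(j < D | j != i) c j i)%N.
Hypothesis F_gt0 : forall n, (0 < n)%N -> (0 < F n)%N.
Hypothesis csum_le_F : forall n, (0 < n)%N -> (csum c i <= F n)%N.

Let pick_weight r (a : state D) (s : seq ('I_D * nat)) : R :=
  \prod_(p <- s) ((a p.1 p.2)%:R / (F r)%:R).

Let pick_weight_ge0 r a s : 0 <= pick_weight r a s.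
Proof. by apply: prodr_ge0 => p _; rewrite divr_ge0. Qed.

Lemma transition_expect_ge0 r a f : (forall b, 0 <= f b)%E ->
  (0 <= law_expect (transition R c F i r a) f)%E.
Proof.
move=> f_ge0; rewrite /law_expect big_map sume_ge0 // => s _.
by rewrite mule_ge0 // lee_fin pick_weight_ge0.
Qed.

Lemma transition_expect_le r a f M : (0 < r)%N -> admissible c F i r a ->
  0 <= M -> (forall b, admissible c F i r.+1 b -> (f b <= M%:E)%E) ->
  (law_expect (transition R c F i r a) f <= M%:E)%E.
Proof.
move=> r_gt0 [_ mass_le] M_ge0 f_le; rewrite /law_expect big_map /=.
set picks := seqs _ _.
apply: (@le_trans _ _ (\sum_(s <- picks) (pick_weight r a s * M)%:E)%E).
  rewrite big_seq [leRHS]big_seq; apply: lee_sum => s s_picks.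
  rewrite EFinM lee_wpmul2l ?lee_fin ?pick_weight_ge0 //.
  by apply: f_le; apply: newstate_admissible.
rewrite sumEFin -mulr_suml lee_fin ler_piMl // sum_seqs_prod.
apply: exprn_ile1; first by rewrite sumr_ge0 // => p _; rewrite divr_ge0.
rewrite -mulr_suml -natr_sum ler_pdivrMr ?ltr0n ?F_gt0 // mul1r ler_nat.
exact: mass_le.
Qed.

Lemma lawA_expectS n f : (forall b, 0 <= f b)%E ->
  law_expect (lawA R c F i n.+1) f =
  law_expect (lawA R c F i n) (fun a => law_expect (transition R c F i n.+1 a) f).
Proof.
move=> f_ge0; rewrite /law_expect /= big_flatten /= big_map; apply: eq_bigr => q _.
rewrite /transition -map_comp !big_map ge0_sume_distrr => [|s _].
  by apply: eq_bigr => s _; rewrite /= EFinM muleA.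
by rewrite mule_ge0 // lee_fin pick_weight_ge0.
Qed.

Lemma lawA_expect_ge0 n f : (forall b, 0 <= f b)%E ->
  (0 <= law_expect (lawA R c F i n) f)%E.
Proof.
elim: n f => [|n IH] f f_ge0; first by rewrite /law_expect big_seq1 mul1e.
by rewrite lawA_expectS //; apply: IH => a; exact: transition_expect_ge0.
Qed.

Lemma lawA_expect_le n f M : (forall b, 0 <= f b)%E -> 0 <= M ->
  (forall a, admissible c F i n.+1 a -> (f a <= M%:E)%E) ->
  (law_expect (lawA R c F i n) f <= M%:E)%E.
Proof.
elim: n f => [|n IH] f f_ge0 M_ge0 f_le.
  by rewrite /law_expect big_seq1 mul1e; apply/f_le/init_admissible.
rewrite lawA_expectS //; apply: IH => // [a|a a_adm].
  exact: transition_expect_ge0.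
exact: transition_expect_le.
Qed.

End LawA.

Lemma ge0_le_integralT (R : realType) d (T : measurableType d)
    (mu : {measure set T -> \bar R}) (f g : T -> \bar R) :
  (forall t, 0 <= f t)%E -> (forall t, f t <= g t)%E ->
  (\int[mu]_t f t <= \int[mu]_t g t)%E.
Proof.
move=> f_ge0 fg; rewrite !ge0_integralTE // => [|t]; last exact: le_trans (fg t).
by apply: le_ereal_sup => _ [h hf <-]; exists h => //= t; exact: le_trans (fg t).
Qed.

Lemma uniform01_between_le {R : realType} (l h : R) :
  (uniform_prob (@ltr01 R) `]Num.min l h, Num.max l h] <= `|l - h|%:E)%E.
Proof.
have max_min : Num.max l h - Num.min l h = `|l - h|.
  case: leP => lh; first by rewrite distrC ger0_norm // subr_ge0.
  by rewrite ger0_norm // subr_ge0 ltW.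
apply: (@le_trans _ _ (\int[lebesgue_measure]_(x in `]Num.min l h, Num.max l h])
  (cst 1%:E) x)%E).
  apply: ge0_le_integral => //.
  - by move=> x _; rewrite lee_fin uniform_pdf_ge0 // ltr01.
  - apply/measurable_EFinP/measurable_funTS; exact: measurable_uniform_pdf.
  - by move=> x _; rewrite lee_fin /uniform_pdf subr0 invr1; case: ifP.
rewrite integral_cst // mul1e.
change (lebesgue_measure `]Num.min l h, Num.max l h] <= `|l - h|%:E)%E.
rewrite lebesgue_measure_itv /= lte_fin.
case: ifP => _; rewrite ?lee_fin //.
by change ((Num.max l h - Num.min l h)%:E <= `|l - h|%:E)%E; rewrite max_min.
Qed.

Lemma step_distance_le (R : realDomainType) (u l h : R) :
  `|(if u <= h then 1 else 0) - (if u <= l then 1 else 0)|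
    <= (if Num.min l h < u <= Num.max l h then 1 else 0 : R).
Proof.
case: (boolP (Num.min l h < u <= Num.max l h)) => [_|].
  by case: (u <= h); case: (u <= l); rewrite ?subrr ?subr0 ?sub0r ?normrN ?normr1 ?normr0.
rewrite negb_and -leNgt -ltNge le_min gt_max => /orP [/andP [-> ->]|/andP [hl hh]].
  by rewrite subrr normr0.
by rewrite (leNgt u h) hh (leNgt u l) hl subrr normr0.
Qed.

Lemma normr_le_eucl_norm {R : realType} {D} (y : 'I_D -> R) j : `|y j| <= eucl_norm y.
Proof.
rewrite /eucl_norm -sqrtr_sqr ler_wsqrtr // (bigD1 j) //= lerDl.
by rewrite sumr_ge0 // => l _; exact: sqr_ge0.
Qed.

Lemma limn_sum_finsupp (R : realType) (f : nat -> R) N :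
  (forall m, (N < m)%N -> f m = 0) ->
  limn (fun n => \sum_(1 <= m < n) f m) = \sum_(m <- iota 1 N) f m.
Proof.
move=> f_supp; apply: lim_near_cst => //; exists N.+1 => // n /= hn.
rewrite /index_iota (_ : (n - 1 = N + (n - 1 - N))%N); last by lia.
rewrite iotaD big_cat /= [X in _ + X]big1_seq ?addr0 // => m /andP [_].
by rewrite mem_iota => hm; apply: f_supp; lia.
Qed.

(* [fams c F i r] is convertible to [families D (nfam c F i r)]. *)
Definition families (D N : nat) : seq ('I_D * nat) :=
  [seq (j, m) | j <- enum 'I_D, m <- iota 1 N].

Section GfunDistance.
Variables (R : realType) (D : nat) (F : nat -> nat) (k : 'I_D) (tau : nat).
Variables (a : state D) (N : nat).
Hypothesis a_supp : forall j m, (N < m)%N -> a j m = 0%N.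

Lemma gfun_finsupp (x : 'I_D -> R) u : gfun F k x tau a u =
  (F tau)%:R^-1 * \sum_(p <- families D N)
     (a p.1 p.2)%:R * (if u p.1 p.2 <= x p.1 then 1 else 0) - x k.
Proof.
rewrite /gfun /families big_allpairs_dep /= enumT; congr (_ * _ - _).
by apply: eq_bigr => j _; apply: limn_sum_finsupp => m hm; rewrite a_supp ?mul0r.
Qed.

Lemma gfun_distance_le (x z : 'I_D -> R) u :
  `|gfun F k z tau a u - gfun F k x tau a u| <=
  (F tau)%:R^-1 * \sum_(p <- families D N) (a p.1 p.2)%:R *
     (if Num.min (x p.1) (z p.1) < u p.1 p.2 <= Num.max (x p.1) (z p.1)
      then 1 else 0)
  + `|z k - x k|.
Proof.
rewrite !gfun_finsupp; set Fi := (F tau)%:R^-1.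
set Sz := \sum_(p <- _) _; set Sx := \sum_(p <- _) _.
have Fi_ge0 : 0 <= Fi by rewrite invr_ge0.
rewrite (_ : _ - _ = Fi * (Sz - Sx) - (z k - x k)); last by ring.
apply: le_trans (ler_normB _ _) _; rewrite lerD2r normrM ger0_norm //.
apply: ler_wpM2l => //; rewrite /Sz /Sx -sumrB.
apply: le_trans (ler_norm_sum _ _ _) _; apply: ler_sum => p _.
by rewrite -mulrBr normrM normr_nat ler_wpM2l // step_distance_le.
Qed.

End GfunDistance.

Arguments gfun_distance_le {R D F k tau a N}.

Lemma integral_indic_comb (R : realType) d (T : measurableType d)
    (P : probability T R) (I : Type) (s : seq I) (A : I -> set T) (w : I -> R) c e :
  (forall p, measurable (A p)) -> (forall p, 0 <= w p) -> 0 <= c -> 0 <= e ->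
  (\int[P]_t (c%:E * \sum_(p <- s) (w p)%:E * (\1_(A p) t)%:E + e%:E) =
   c%:E * \sum_(p <- s) (w p)%:E * P (A p) + e%:E)%E.
Proof.
move=> A_meas w_ge0 c_ge0 e_ge0.
have indic_ge0 p t : (0 <= (\1_(A p) t)%:E :> \bar R)%E by rewrite lee_fin indicE.
have term_ge0 p t : (0 <= (w p)%:E * (\1_(A p) t)%:E)%E by rewrite mule_ge0 ?lee_fin.
have indic_meas p : measurable_fun setT (fun t => (\1_(A p) t)%:E : \bar R).
  by apply/measurable_EFinP; exact: measurable_indic.
have term_meas p : measurable_fun setT (fun t => (w p)%:E * (\1_(A p) t)%:E)%E.
  exact: measurable_funeM.
rewrite ge0_integralD //; last 2 first.
- by move=> t _; rewrite mule_ge0 ?lee_fin // sume_ge0.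
- exact/measurable_funeM/emeasurable_sum.
rewrite integral_cst // [X in (_ * X)%E]probability_setT mule1.
rewrite ge0_integralZl //; last 2 first.
- exact: emeasurable_sum.
- by move=> t _; exact: sume_ge0.
rewrite ge0_integral_sum //; congr (_ * _ + _)%E; apply: eq_bigr => p _.
by rewrite ge0_integralZl // ?lee_fin // integral_indic // setIT.
Qed.

Section ExpectedDistance.
Variables (R : realType) (D : nat) (dO : measure_display) (Omega : measurableType dO).
Variables (P : probability Omega R) (U : 'I_D -> nat -> {RV P >-> R}).
Hypothesis U_uniform : forall j m (A : set R), measurable A ->
  distribution P (U j m) A = uniform_prob (@ltr01 R) A.

Lemma expect_gfun_distance_le F k tau (a : state D) N (x z : 'I_D -> R) :
  (forall j m, (N < m)%N -> a j m = 0%N) ->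
  (\int[P]_w (`| gfun F k z tau a (fun j m => U j m w)
              - gfun F k x tau a (fun j m => U j m w) |)%:E
   <= (((F tau)%:R^-1 * (\sum_(p <- families D N) (a p.1 p.2)%:R) + 1)
        * eucl_norm (fun j => x j - z j))%:E)%E.
Proof.
move=> a_supp; set Fi := (F tau)%:R^-1; set nrm := eucl_norm _.
have Fi_ge0 : 0 <= Fi by rewrite invr_ge0.
pose itv j : set R := [set` `]Num.min (x j) (z j), Num.max (x j) (z j)]].
pose between (p : 'I_D * nat) := U p.1 p.2 @^-1` itv p.1.
have between_meas p : measurable (between p).
  by apply: measurable_funPTI; exact: measurable_itv.
have P_between p : (P (between p) <= nrm%:E)%E.
  rewrite (_ : P _ = distribution P (U p.1 p.2) (itv p.1)) // U_uniform.
    apply: le_trans (uniform01_between_le (x p.1) (z p.1)) _.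
    by rewrite lee_fin; exact: (normr_le_eucl_norm (fun j => x j - z j)).
  exact: measurable_itv.
pose bound w := (Fi%:E * \sum_(p <- families D N)
  (a p.1 p.2)%:R%:E * (\1_(between p) w)%:E + `|z k - x k|%:E)%E.
apply: (le_trans (@ge0_le_integralT _ _ _ P _ bound _ _)) => [w|w|].
- by rewrite lee_fin.
- rewrite /bound; under eq_bigr do rewrite -EFinM.
  rewrite sumEFin -EFinM -EFinD lee_fin.
  apply: le_trans (gfun_distance_le a_supp x z _) _.
  rewrite lerD2r ler_wpM2l //; apply: ler_sum => p _.
  rewrite indicE; case: ifPn => between_w.
    by rewrite mem_set //= /between /itv /= in_itv.
  by rewrite memNset //= /between /itv /= in_itv; exact/negP.
rewrite integral_indic_comb //.
have sum_P_le : (\sum_(p <- families D N) (a p.1 p.2)%:R%:E * P (between p)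
    <= (\sum_(p <- families D N) (a p.1 p.2)%:R * nrm)%:E)%E.
  by rewrite -sumEFin; apply: lee_sum => p _; rewrite EFinM lee_wpmul2l ?lee_fin.
apply: le_trans (leeD (lee_wpmul2l _ sum_P_le) (lexx _)) _; first by rewrite lee_fin.
rewrite -EFinM -EFinD lee_fin -mulr_suml mulrDl mul1r mulrA lerD2l distrC.
exact: (normr_le_eucl_norm (fun j => x j - z j)).
Qed.

End ExpectedDistance.

Arguments expect_gfun_distance_le {R D dO Omega P U} U_uniform {F k tau a N} x z.

Lemma mass_div_F_le (R : realType) D (c : 'I_D -> 'I_D -> nat) F i tau a :
  (forall n, (0 < n)%N -> (0 < F n)%N) -> admissible c F i tau.-1.+1 a ->
  (F tau)%:R^-1 * (mass c F i tau.-1.+1 a)%:R + 1 <= 2 + (F 1)%:R / (F 0)%:R :> R.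
Proof.
move=> F_gt0 [_ mass_le].
rewrite (_ : 2 + _ = 1 + (F 1)%:R / (F 0)%:R + 1) ?lerD2r; last by ring.
move: mass_le; case: tau => [|t] /= mass_le.
  by rewrite mulrC ler_wpDl // ler_wpM2r ?invr_ge0 // ler_nat.
rewrite ler_wpDr ?divr_ge0 // ler_pdivrMl ?ltr0n ?F_gt0 // mulr1 ler_nat.
exact: mass_le.
Qed.

Theorem lemmaA1 (R : realType) (D : nat) (hD : (0 < D)%N)
  (c : 'I_D -> 'I_D -> nat)
  (hbal : forall k : 'I_D, csum c k = (\sum_(j < D | j != k) c j k)%N)
  (L : probability nat R) (hL0 : L [set 0%N] = 0%E)
  (F : nat -> nat) (hF1 : forall n, (0 < n)%N -> (0 < F n)%N)
  (hF : forall n, (0 < n)%N -> forall k : 'I_D, (csum c k <= F n)%N)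
  (dO : measure_display) (Omega : measurableType dO) (P : probability Omega R)
  (U : 'I_D -> nat -> {RV P >-> R})
  (hU : forall j m (A : set R), measurable A ->
          distribution P (U j m) A = uniform_prob (@ltr01 R) A)
  (hind : mutually_independent P (fun p : 'I_D * nat => (U p.1 p.2 : Omega -> R))) :
  exists Kc : R, forall x z : 'I_D -> R,
    (forall j, 0 <= x j <= 1) -> (forall j, 0 <= z j <= 1) ->
    forall k : 'I_D,
    (\int[L]_tau
       (\sum_(q <- lawA R c F k tau.-1)
          (q.1)%:E *
          \int[P]_w (`| gfun F k z tau q.2 (fun j m => U j m w)
                      - gfun F k x tau q.2 (fun j m => U j m w) |)%:E)
     <= (Kc * eucl_norm (fun j => x j - z j))%:E)%E.
Proof.
pose Kc : R := 2 + (F 1)%:R / (F 0)%:R.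
exists Kc => x z _ _ k; set nrm := eucl_norm _.
have nrm_ge0 : 0 <= nrm by exact: sqrtr_ge0.
have Kc_ge0 : 0 <= Kc by rewrite addr_ge0 ?divr_ge0.
pose dist tau (a : state D) := (\int[P]_w (`| gfun F k z tau a (fun j m => U j m w)
                      - gfun F k x tau a (fun j m => U j m w) |)%:E)%E.
have dist_ge0 tau a : (0 <= dist tau a)%E by apply: integral_ge0 => w _.
have dist_le tau a : admissible c F k tau.-1.+1 a -> (dist tau a <= (Kc * nrm)%:E)%E.
  move=> a_adm; have [a_supp _] := a_adm.
  apply: le_trans (expect_gfun_distance_le hU x z a_supp) _.
  by rewrite lee_fin ler_wpM2r // -natr_sum; exact: mass_div_F_le.
apply: (le_trans (@ge0_le_integralT _ _ _ L _ (cst (Kc * nrm)%:E) _ _)) => [tau|tau|].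
- change (0 <= law_expect (lawA R c F k tau.-1) (dist tau))%E.
  exact: lawA_expect_ge0.
- change (law_expect (lawA R c F k tau.-1) (dist tau) <= (Kc * nrm)%:E)%E.
  by apply: lawA_expect_le => // [n /hF | | a /dist_le]; rewrite ?mulr_ge0.
by rewrite integral_cst // [X in (_ * X)%E]probability_setT mule1.
Qed.
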